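(* Assume the hypotheses of the one-step error recursion hold, and let $\Upsilon_C>0$, $\rho\in(0,1)$ be constants such that for every $i\in[1,T]$ with $(\tilde z_i^0,\tilde\lambda_i^0)\in\mathcal N_\epsilon(\tilde z_i^\star,\tilde\lambda_i^\star)$ the recursion $$\Psi^1_{k,i}\le\Upsilon_C\Big(\sum_{j=n_1(i)}^{n_2(i)}\rho^{|k-j|}(\Psi^0_{j,i})^2+\rho^{k-n_1(i)}\|x^0_{n_1(i),i}-x^\star_{n_1(i)}\|+\rho^{n_2(i)-k}\epsilon\Big),\quad k\in[n_1(i),n_2(i)],$$ holds. Suppose $L$ and $\epsilon$ satisfy $$\rho^L\le\epsilon\le\frac{1-\rho}{16\Upsilon_C(1+\rho)}.$$ Then for every $i\in[1,T-1]$: if $(\tilde z_i^0,\tilde\lambda_i^0)\in\mathcal N_\epsilon(\tilde z_i^\star,\tilde\lambda_i^\star)$, then $(\tilde z_{i+1}^0,\tilde\lambda_{i+1}^0)\in\mathcal N_\epsilon(\tilde z_{i+1}^\star,\tilde\lambda_{i+1}^\star)$.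
   Context: Notation: $[k]=\{0,1,\dots,k\}$; for integers $k_1<k_2$, $[k_1,k_2]$, $[k_1,k_2)$, $(k_1,k_2]$ denote the corresponding sets of integers; $a\vee b=\max(a,b)$, $a\wedge b=\min(a,b)$. Full-horizon problem $\mathcal P_{0:N}(d)$: minimize $\sum_{k=0}^{N-1}g_k(x_k,u_k;d_k)+g_N(x_N)$ over $x_k\in\mathbb R^{n_x}$, $u_k\in\mathbb R^{n_u}$ subject to $x_{k+1}=f_k(x_k,u_k;d_k)$, $k\in[N-1]$, $x_0=\bar x_0$; $g_k,f_k,g_N$ twice continuously differentiable. Write $z_k=(x_k;u_k)$ ($k<N$), $z_N=x_N$, multipliers $\lambda=(\lambda_{-1};\dots;\lambda_{N-1})$, stage Lagrangians $\mathcal L_k=g_k(z_k;d_k)+\lambda_{k-1}^Tx_k-\lambda_k^Tf_k(z_k;d_k)$. $(z^\star,\lambda^\star)$ is a fixed KKT solution of $\mathcal P_{0:N}(d)$. ''The hypotheses of the one-step error recursion'' are: (a) Uniform SOSC in the $M$-neighborhood: reduced Hessian of the full problem $\succeq\gamma_H I$ at every point agreeing with $(z^\star,\lambda^\star)$ outside a window of $M+1$ consecutive stages and within $\epsilon$ (componentwise in $x_k,u_k,\lambda_k$) inside it; (b) controllability: for each $k\in[N-t]$ some $t_k\in[1,t]$ with $\Xi_{k,t_k}\Xi_{k,t_k}^T\succeq\gamma_C I$ at all points within $\epsilon$ of $z^\star$, where $\Xi_{k,s}=(B_{k+s-1},A_{k+s-1}B_{k+s-2},\dots,A_{k+s-1}\cdots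 A_{k+1}B_k)$, $A_k,B_k$ the Jacobians of $f_k$; (c) $\|A_k\|,\|B_k\|,\|H_k\|,\|\nabla^2 g_N\|\le\Upsilon$ (with $\Upsilon\ge2+\sqrt2$) within $\epsilon$ of the solution, $H_k$ the Hessian of $\mathcal L_k$ in $(x_k,u_k)$; (d) $H_k$ and $\nabla f_k$ are $\Upsilon_L$-Lipschitz within $\epsilon$ of the solution; (e) $\mu\ge16\Upsilon(\Upsilon^{6t}-\Upsilon^{4t})/\gamma_C^2$. All constants are independent of $N$. Receding horizons: integers $L\ge1$, $M=SL$ with $S>2$ an integer, $N\ge M$; $T=\lceil(N-M)/L\rceil+1$; $n_1(i)=(i-1)L$, $n_2(i)=(n_1(i)+M)\wedge N$ for $i\in[1,T]$. A fixed guess $(z^0,\lambda^0)$ with $\|x_k^0-x_k^\star\|\vee\|u_k^0-u_k^\star\|\vee\|\lambda_k^0-\lambda_k^\star\|\le\epsilon$ for all $k$ and $x_0^0=\bar x_0$ is given. Subproblem $i$: minimize over $x_{n_1(i):n_2(i)},u_{n_1(i):n_2(i)-1}$ the cost $\sum_{k=n_1(i)}^{n_2(i)-1}g_k(z_k;d_k)+\Phi_i(x_{n_2(i)})$ subject to $x_{k+1}=f_k(z_k;d_k)$, $k\in[n_1(i),n_2(i)-1]$, $x_{n_1(i)}=\bar x_{n_1(i)}$, where for $i<T$, $\Phi_i(x)=g_{n_2(i)}(x,u^0_{n_2(i)};d_{n_2(i)})-(\lambda^0_{n_2(i)})^Tf_{n_2(i)}(x,u^0_{n_2(i)};d_{n_2(i)})+\frac\mu2\|x-x^0_{n_2(i)}\|^2$,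 and $\Phi_T=g_N$. Its Lagrangian is $\mathcal L^i=\sum_{k=n_1(i)}^{n_2(i)-1}\mathcal L_k+\Phi_i(x_{n_2(i)})+\lambda_{n_2(i)-1}^Tx_{n_2(i)}-\lambda_{n_1(i)-1}^T\bar x_{n_1(i)}$ in $\tilde z_i=(z_{n_1(i)};\dots;z_{n_2(i)-1};x_{n_2(i)})$, $\tilde\lambda_i=\lambda_{n_1(i)-1:n_2(i)-1}$, with KKT matrix $K^i$. Truncated solution $\tilde z_i^\star=(z^\star_{n_1(i):n_2(i)-1};x^\star_{n_2(i)})$, $\tilde\lambda_i^\star=\lambda^\star_{n_1(i)-1:n_2(i)-1}$; $(\tilde z_i,\tilde\lambda_i)\in\mathcal N_\epsilon(\tilde z_i^\star,\tilde\lambda_i^\star)$ means $\|x_k-x_k^\star\|\vee\|u_k-u_k^\star\|\vee\|\lambda_k-\lambda_k^\star\|\le\epsilon$ for $k\in[n_1(i),n_2(i)-1]$ and $\|x_{n_2(i)}-x^\star_{n_2(i)}\|\le\epsilon$. Algorithm 1 (one Newton step per horizon): iterates $(z^0_{k,i},\lambda^0_{k,i})$ (input to subproblem $i$) and $(z^1_{k,i},\lambda^1_{k,i})$ (output), with $z_{n_2(i),i}=x_{n_2(i),i}$. For $i=1$: $z^0_{k,1}=z^0_k$ for $k\in[0,M-1]$, $x^0_{M,1}=x^0_M$, $\lambda^0_{k,1}=\lambda^0_k$ for $k\in[-1,M-1]$. For $i\ge2$: $\bar x_{n_1(i)}=x^1_{n_1(i),i-1}$; $(z^0_{k,i},\lambda^0_{k,i})=(z^1_{k,i-1},\lambda^1_{k,i-1})$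 for $k\in[n_1(i),n_2(i)-2L]$; $(z^0_{k,i},\lambda^0_{k,i})=(z^0_k,\lambda^0_k)$ for $k\in(n_2(i)-2L,n_2(i)-1]$; $x^0_{n_2(i),i}=x^0_{n_2(i)}$; $\lambda^0_{n_1(i)-1,i}=\lambda^1_{n_1(i)-1,i-1}$. Then $(\tilde z_i^1,\tilde\lambda_i^1)=(\tilde z_i^0,\tilde\lambda_i^0)+\Delta$ with $K^i(\tilde z_i^0,\tilde\lambda_i^0;\tilde d_i)\Delta=-\nabla\mathcal L^i(\tilde z_i^0,\tilde\lambda_i^0;\tilde d_i)$. Note $x^0_{n_1(i),i}=\bar x_{n_1(i)}$. Errors: $\Psi^{\mathrm{Id}}_{k,i}=\|(z^{\mathrm{Id}}_{k,i}-z^\star_k;\lambda^{\mathrm{Id}}_{k,i}-\lambda^\star_k)\|$ for $k\in[n_1(i),n_2(i)-1]$ and $\Psi^{\mathrm{Id}}_{n_2(i),i}=\|x^{\mathrm{Id}}_{n_2(i),i}-x^\star_{n_2(i)}\|$, $\mathrm{Id}\in\{0,1\}$. *)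

(* abstract real closed field R (Euclidean norm needs sqrt). *)
From HB Require Import structures.
From mathcomp Require Import all_boot all_order all_algebra.
Set Implicit Arguments. Unset Strict Implicit. Unset Printing Implicit Defensive.
Import Order.TTheory GRing.Theory Num.Theory.
Local Open Scope ring_scope.

Definition vnorm (R : rcfType) (n : nat) (v : 'cV[R]_n) : R :=
  Num.sqrt (\sum_(i < n) (v i 0) ^+ 2).

Definition nat_dist (k j : nat) : nat := ((k - j) + (j - k))%N.

(* Receding-horizon indices: M = S*L, T = ceil((N-M)/L) + 1,
   n1(i) = (i-1)L, n2(i) = min(n1(i)+M, N). *)
Definition horM (S L : nat) : nat := (S * L)%N.
Definition horT (N S L : nat) : nat := (((N - horM S L) + L.-1) %/ L + 1)%N.
Definition n1 (L i : nat) : nat := ((i - 1) * L)%N.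
Definition n2 (N S L i : nat) : nat := minn (n1 L i + horM S L) N.

(* Error Psi_{k,i} of an iterate (x,u,lam) (indexed by stage k and horizon i)
   w.r.t. the KKT solution (xs,us,ls); e = n2(i) is the horizon end. *)
Definition Psi (R : rcfType) (nx nu : nat)
  (xs : nat -> 'cV[R]_nx) (us : nat -> 'cV[R]_nu) (ls : nat -> 'cV[R]_nx)
  (x : nat -> nat -> 'cV[R]_nx) (u : nat -> nat -> 'cV[R]_nu)
  (l : nat -> nat -> 'cV[R]_nx) (e k i : nat) : R :=
  if (k < e)%N then
    vnorm (col_mx (col_mx (x k i - xs k) (u k i - us k)) (l k i - ls k))
  else vnorm (x k i - xs k).

(* (tilde z_i, tilde lambda_i) in N_eps(tilde z_i star, tilde lambda_i star),
   horizon [b, e] = [n1(i), n2(i)]. *)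
Definition inNbhd (R : rcfType) (nx nu : nat)
  (xs : nat -> 'cV[R]_nx) (us : nat -> 'cV[R]_nu) (ls : nat -> 'cV[R]_nx)
  (x : nat -> nat -> 'cV[R]_nx) (u : nat -> nat -> 'cV[R]_nu)
  (l : nat -> nat -> 'cV[R]_nx) (eps : R) (b e i : nat) : Prop :=
  (forall k, (b <= k)%N -> (k < e)%N ->
     [/\ vnorm (x k i - xs k) <= eps, vnorm (u k i - us k) <= eps
       & vnorm (l k i - ls k) <= eps])
  /\ vnorm (x e i - xs e) <= eps.

From HB Require Import structures.
From mathcomp Require Import all_boot all_order all_algebra.
From mathcomp Require Import zify lra.
Import Order.TTheory GRing.Theory Num.Theory.
Local Open Scope ring_scope.
Set Implicit Arguments. Unset Strict Implicit. Unset Printing Implicit Defensive.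

(* The stages warm-started into horizon i+1 lie at least L stages away from
   both ends of horizon i, so in the error recursion for horizon i the
   boundary weights rho^(k - n1) and rho^(n2 - k) are at most rho^L <= eps.
   The quadratic term is at most 3 eps^2 (1 + rho) / (1 - rho), because
   sum_j rho^|k - j| <= (1 + rho) / (1 - rho).  With
   eps <= (1 - rho) / (16 UC (1 + rho)) the three terms contribute at most
   3/16, 1/16 and 1/16 of eps.  The remaining stages of horizon i+1 are
   copied from the guess, which is eps-close to the solution. *)

Lemma vnorm_ge0 (R : rcfType) n (v : 'cV[R]_n) : 0 <= vnorm v.
Proof. exact: sqrtr_ge0. Qed.

Lemma vnorm_sqr (R : rcfType) n (v : 'cV[R]_n) :
  vnorm v ^+ 2 = \sum_(i < n) v i 0 ^+ 2.
Proof. by rewrite sqr_sqrtr // sumr_ge0 // => i _; rewrite sqr_ge0. Qed.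

Lemma vnorm_col_mx (R : rcfType) m n (a : 'cV[R]_m) (b : 'cV[R]_n) :
  vnorm (col_mx a b) ^+ 2 = vnorm a ^+ 2 + vnorm b ^+ 2.
Proof.
rewrite !vnorm_sqr big_split_ord /=.
by congr (_ + _); apply: eq_bigr => i _; rewrite ?col_mxEu ?col_mxEd.
Qed.

Lemma vnorm_col_mxu (R : rcfType) m n (a : 'cV[R]_m) (b : 'cV[R]_n) :
  vnorm a <= vnorm (col_mx a b).
Proof.
rewrite -(ler_pXn2r (isT : 0 < 2)%N) ?nnegrE ?vnorm_ge0 //.
by rewrite vnorm_col_mx lerDl sqr_ge0.
Qed.

Lemma vnorm_col_mxd (R : rcfType) m n (a : 'cV[R]_m) (b : 'cV[R]_n) :
  vnorm b <= vnorm (col_mx a b).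
Proof.
rewrite -(ler_pXn2r (isT : 0 < 2)%N) ?nnegrE ?vnorm_ge0 //.
by rewrite vnorm_col_mx lerDr sqr_ge0.
Qed.

Lemma geometric_sum_le (R : realFieldType) (r : R) n : 0 <= r ->
  (1 - r) * \sum_(i < n) r ^+ i <= 1.
Proof.
move=> r_ge0; rewrite -opprB mulNr -subrX1 opprB lerBlDr lerDl.
exact: exprn_ge0.
Qed.

Lemma sum_nat_dist_le (R : realFieldType) (r : R) a b k :
  0 <= r -> r < 1 -> (k < b)%N ->
  (1 - r) * \sum_(a <= j < b) r ^+ nat_dist k j <= 1 + r.
Proof.
move=> r_ge0 r_lt1 kb.
have r1_ge0 : 0 <= 1 - r by lra.
have terms_ge0 j : 0 <= r ^+ nat_dist k j by exact: exprn_ge0.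
have widen : \sum_(a <= j < b) r ^+ nat_dist k j
             <= \sum_(0 <= j < b) r ^+ nat_dist k j.
  case: (leqP a b) => ab; last by rewrite big_geq ?sumr_ge0 // ltnW.
  by rewrite (big_cat_nat (leq0n a) ab) /= lerDr sumr_ge0.
apply: le_trans (ler_wpM2l r1_ge0 widen) _.
rewrite (big_cat_nat (leq0n k) (ltnW kb)) /= mulrDr addrC lerD //.
  rewrite -{1}(add0n k) big_addn big_mkord.
  rewrite (eq_bigr (fun i : 'I__ => r ^+ i)) ?geometric_sum_le // => i _.
  by rewrite /nat_dist; congr (_ ^+ _); lia.
rewrite big_nat_rev /= add0n big_mkord.
rewrite (eq_bigr (fun i : 'I__ => r * r ^+ i)) => [|i _]; last first.
  by rewrite /nat_dist -exprS; congr (_ ^+ _); have := ltn_ord i; lia.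
rewrite -mulr_sumr mulrCA -[X in _ <= X]mulr1 ler_wpM2l //.
exact: geometric_sum_le.
Qed.

Lemma error_recursion_contracts (R : realFieldType) (U e r P q p : R) :
  0 < U -> 0 <= r -> r < 1 -> 0 <= e ->
  e <= (1 - r) / (16%:R * U * (1 + r)) ->
  (1 - r) * P <= 3%:R * e ^+ 2 * (1 + r) -> q <= e ^+ 2 -> p <= e ->
  U * (P + q + p * e) <= e.
Proof.
move=> U_gt0 r_ge0 r_lt1 e_ge0 e_small P_le q_le p_le.
have Ue_small : U * e * (16%:R * (1 + r)) <= 1 - r.
  by rewrite -mulrA mulrCA -ler_pdivlMr ?mulr_gt0 //; lra.
have Ue_ge0 : 0 <= U * e by rewrite mulr_ge0 // ltW.
have UP_le : (1 - r) * (U * P) <= (1 - r) * (3%:R / 16%:R * e).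
  have := ler_wpM2l (ltW U_gt0) P_le.
  have := ler_wpM2l (mulr_ge0 (ler0n R 3) e_ge0) Ue_small.
  rewrite !expr2; move=> h1 h2; nra.
rewrite ler_pM2l in UP_le; last lra.
have Uq_le : U * q <= U * e * e by rewrite -mulrA -expr2 ler_pM2l.
have Upe_le : U * (p * e) <= U * e * e by rewrite mulrA ler_wpM2r // ler_pM2l.
have Ue_le : U * e <= 1 / 16%:R by rewrite ler_pdivlMr //; nra.
have : U * e * e <= 1 / 16%:R * e by rewrite ler_wpM2r.
rewrite !mulrDr; lra.
Qed.

Lemma n1S L i : (0 < i)%N -> n1 L i.+1 = (n1 L i + L)%N.
Proof. by case: i => // i _; rewrite /n1 !subn1 /= mulSn addnC. Qed.

Lemma n2S_le N S L i : (0 < i)%N -> (n2 N S L i.+1 <= n2 N S L i + L)%N.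
Proof. by move=> i_gt0; rewrite /n2 n1S //; lia. Qed.

Section OneHorizon.
Variables (R : rcfType) (nx nu : nat).
Variables (xs : nat -> 'cV[R]_nx) (us : nat -> 'cV[R]_nu) (ls : nat -> 'cV[R]_nx).
Variables (x : nat -> nat -> 'cV[R]_nx) (u : nat -> nat -> 'cV[R]_nu).
Variables (l : nat -> nat -> 'cV[R]_nx).

Lemma Psi_sqr_le_inNbhd eps b e i j :
  inNbhd xs us ls x u l eps b e i -> (b <= j <= e)%N ->
  Psi xs us ls x u l e j i ^+ 2 <= 3%:R * eps ^+ 2.
Proof.
move=> [near_stage near_end] /andP[bj je].
have sqr_le (v : R) : 0 <= v -> v <= eps -> v ^+ 2 <= eps ^+ 2.
  by move=> v_ge0 v_le; rewrite ler_pXn2r ?nnegrE // (le_trans v_ge0).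
rewrite /Psi; case: ifP => [je' | /negbT je'].
  have [hx hu hl] := near_stage j bj je'.
  rewrite !vnorm_col_mx.
  move: (sqr_le _ (vnorm_ge0 _) hx) (sqr_le _ (vnorm_ge0 _) hu).
  move: (sqr_le _ (vnorm_ge0 _) hl); lra.
have -> : j = e by lia.
have := sqr_le _ (vnorm_ge0 _) near_end.
have := sqr_ge0 eps; lra.
Qed.

Lemma stage_le_of_Psi_le eps e k i : (k < e)%N ->
  Psi xs us ls x u l e k i <= eps ->
  [/\ vnorm (x k i - xs k) <= eps, vnorm (u k i - us k) <= eps
    & vnorm (l k i - ls k) <= eps].
Proof.
rewrite /Psi => -> Psi_le; split; apply: le_trans Psi_le.
- exact: le_trans (vnorm_col_mxu _ _) (vnorm_col_mxu _ _).
- exact: le_trans (vnorm_col_mxd _ _) (vnorm_col_mxu _ _).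
- exact: vnorm_col_mxd.
Qed.

Variables (x' : nat -> nat -> 'cV[R]_nx) (u' : nat -> nat -> 'cV[R]_nu).
Variables (l' : nat -> nat -> 'cV[R]_nx).

Lemma Psi_step_le_eps (eps rho UC : R) (L b e i k : nat) :
  0 < UC -> 0 < rho -> rho < 1 -> rho ^+ L <= eps ->
  eps <= (1 - rho) / (16%:R * UC * (1 + rho)) ->
  inNbhd xs us ls x u l eps b e i -> (b + L <= k)%N -> (k + L <= e)%N ->
  Psi xs us ls x' u' l' e k i
    <= UC * (\sum_(b <= j < e.+1)
               rho ^+ nat_dist k j * Psi xs us ls x u l e j i ^+ 2
             + rho ^+ (k - b) * vnorm (x b i - xs b) + rho ^+ (e - k) * eps) ->
  Psi xs us ls x' u' l' e k i <= eps.
Proof.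
move=> UC_gt0 rho_gt0 rho_lt1 rhoL_le eps_small near bk ke /le_trans; apply.
have rho_ge0 := ltW rho_gt0.
have eps_ge0 : 0 <= eps by apply: le_trans rhoL_le; exact: exprn_ge0.
have rho_pow_le n : (L <= n)%N -> rho ^+ n <= eps.
  by move=> Ln; apply: le_trans rhoL_le; rewrite ler_wiXn2l // ltW.
have quadratic_le : (1 - rho) * \sum_(b <= j < e.+1)
                       rho ^+ nat_dist k j * Psi xs us ls x u l e j i ^+ 2
                   <= 3%:R * eps ^+ 2 * (1 + rho).
  have Psi_sum_le : \sum_(b <= j < e.+1)
                       rho ^+ nat_dist k j * Psi xs us ls x u l e j i ^+ 2
                   <= \sum_(b <= j < e.+1) rho ^+ nat_dist k j * (3%:R * eps ^+ 2).
    rewrite big_nat_cond [leRHS]big_nat_cond.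
    apply: ler_sum => j /andP[bje _]; rewrite ler_wpM2l ?exprn_ge0 //.
    exact: Psi_sqr_le_inNbhd bje.
  apply: le_trans (ler_wpM2l _ Psi_sum_le) _; first by rewrite subr_ge0 ltW.
  rewrite -mulr_suml (mulrA (1 - rho)) [leRHS]mulrC.
  apply: ler_wpM2r; first by rewrite mulr_ge0 ?sqr_ge0.
  by apply: sum_nat_dist_le => //; lia.
have initial_le : rho ^+ (k - b) * vnorm (x b i - xs b) <= eps ^+ 2.
  rewrite expr2; apply: ler_pM; rewrite ?exprn_ge0 ?vnorm_ge0 //.
    by apply: rho_pow_le; lia.
  have [be | eb] := ltnP b e; first by have [] := near.1 b (leqnn b) be.
  have -> : b = e by lia.
  exact: near.2.
have terminal_le : rho ^+ (e - k) <= eps by apply: rho_pow_le; lia.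
exact: error_recursion_contracts quadratic_le initial_le terminal_le.
Qed.
End OneHorizon.

Theorem theorem3 (R : rcfType) (nx nu N L S : nat)
  (* KKT solution (z star, lambda star) and initial point xbar0 *)
  (xbar0 : 'cV[R]_nx)
  (xs : nat -> 'cV[R]_nx) (us : nat -> 'cV[R]_nu) (ls : nat -> 'cV[R]_nx)
  (* fixed guess (z^0, lambda^0) *)
  (xg : nat -> 'cV[R]_nx) (ug : nat -> 'cV[R]_nu) (lg : nat -> 'cV[R]_nx)
  (* iterates of Algorithm 1: input (x0,u0,l0) k i and output (x1,u1,l1) k i *)
  (x0 x1 : nat -> nat -> 'cV[R]_nx) (u0 u1 : nat -> nat -> 'cV[R]_nu)
  (l0 l1 : nat -> nat -> 'cV[R]_nx)
  (eps rho UC : R) :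
  (0 < L)%N -> (2 < S)%N -> (horM S L <= N)%N ->
  xs 0%N = xbar0 ->
  (* guess within eps of the solution, with x_0^0 = xbar0 *)
  (forall k, (k <= N)%N -> vnorm (xg k - xs k) <= eps) ->
  (forall k, (k < N)%N -> vnorm (ug k - us k) <= eps) ->
  (forall k, (k < N)%N -> vnorm (lg k - ls k) <= eps) ->
  xg 0%N = xbar0 ->
  (* initialization of subproblem 1 *)
  (forall k, (k <= horM S L)%N -> x0 k 1%N = xg k) ->
  (forall k, (k < horM S L)%N -> u0 k 1%N = ug k /\ l0 k 1%N = lg k) ->
  (* warm start of subproblem i >= 2 *)
  (forall i, (2 <= i <= horT N S L)%N ->
     x0 (n1 L i) i = x1 (n1 L i) (i - 1)%N) ->
  (forall i k, (2 <= i <= horT N S L)%N ->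
     (n1 L i <= k <= n2 N S L i - 2 * L)%N ->
     [/\ x0 k i = x1 k (i - 1)%N, u0 k i = u1 k (i - 1)%N
       & l0 k i = l1 k (i - 1)%N]) ->
  (forall i k, (2 <= i <= horT N S L)%N ->
     (n2 N S L i - 2 * L < k <= (n2 N S L i).-1)%N ->
     [/\ x0 k i = xg k, u0 k i = ug k & l0 k i = lg k]) ->
  (forall i, (2 <= i <= horT N S L)%N -> x0 (n2 N S L i) i = xg (n2 N S L i)) ->
  (* constants of the one-step error recursion *)
  0 < UC -> 0 < rho -> rho < 1 ->
  (* the one-step error recursion *)
  (forall i, (1 <= i <= horT N S L)%N ->
     inNbhd xs us ls x0 u0 l0 eps (n1 L i) (n2 N S L i) i ->
     forall k, (n1 L i <= k <= n2 N S L i)%N ->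
       Psi xs us ls x1 u1 l1 (n2 N S L i) k i
       <= UC * (\sum_(n1 L i <= j < (n2 N S L i).+1)
                  rho ^+ (nat_dist k j) * (Psi xs us ls x0 u0 l0 (n2 N S L i) j i) ^+ 2
                + rho ^+ (k - n1 L i) * vnorm (x0 (n1 L i) i - xs (n1 L i))
                + rho ^+ (n2 N S L i - k) * eps)) ->
  rho ^+ L <= eps ->
  eps <= (1 - rho) / (16%:R * UC * (1 + rho)) ->
  forall i, (1 <= i <= (horT N S L).-1)%N ->
    inNbhd xs us ls x0 u0 l0 eps (n1 L i) (n2 N S L i) i ->
    inNbhd xs us ls x0 u0 l0 eps (n1 L i.+1) (n2 N S L i.+1) i.+1.
Proof.
move=> L_gt0 _ _ _ guess_x guess_u guess_l _ _ _ _ warm_start fresh_start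
  fresh_end UC_gt0 rho_gt0 rho_lt1 recursion rhoL_le eps_small i
  /andP[i_gt0 i_lt] near.
have iS_range : (2 <= i.+1 <= horT N S L)%N by lia.
have i_range : (1 <= i <= horT N S L)%N by lia.
have n1_shift := n1S L i_gt0.
have n2_shift := n2S_le N S L i_gt0.
have n2_le_N j : (n2 N S L j <= N)%N by rewrite /n2 geq_minr.
split=> [k k_ge k_lt |]; last by rewrite fresh_end // guess_x.
have [k_warm | k_fresh] := leqP k (n2 N S L i.+1 - 2 * L).
  have [-> -> ->] := warm_start i.+1 k iS_range (introT andP (conj k_ge k_warm)).
  rewrite subn1 /=; apply: (stage_le_of_Psi_le (e := n2 N S L i)).
    lia.
  have k_range : (n1 L i <= k <= n2 N S L i)%N by lia.
  apply: Psi_step_le_eps (recursion i i_range near k k_range) => //; lia.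
have k_range : (n2 N S L i.+1 - 2 * L < k <= (n2 N S L i.+1).-1)%N by lia.
have [-> -> ->] := fresh_start i.+1 k iS_range k_range.
have k_lt_N := leq_trans k_lt (n2_le_N i.+1).
by split; [rewrite guess_x // ltnW | rewrite guess_u | rewrite guess_l].
Qed.
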